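(* $\mathrm{HS}_{\mathsf{ct}}\not\geq\mathrm{HS}_{\mathsf{st}}$: there is an $\mathrm{HS}$ formula $\psi$ such that no $\mathrm{HS}$ formula $\varphi$ satisfies, for every finite Kripke structure $K$, $K\models_{\mathsf{ct}}\varphi$ iff $K\models_{\mathsf{st}}\psi$.
   Context: A Kripke structure over a finite set $\mathcal{AP}$ is $K=(\mathcal{AP},S,\delta,\mu,s_0)$ with states $S$, left-total $\delta\subseteq S\times S$, labelling $\mu:S\to2^{\mathcal{AP}}$, initial state $s_0$; finite if $S$ is finite. A trace is a non-empty finite prefix of an infinite state sequence following $\delta$; initial if it starts at $s_0$. For a finite word $w=w(0)\cdots w(n)$, $\mathrm{Pref}(w)=\{w[0,i]\mid0\le i\le n-1\}$, $\mathrm{Suff}(w)=\{w[i,n]\mid1\le i\le n\}$. The computation tree $C(K)$ has as states the initial traces of $K$, initial state $s_0$, labelling $\rho\mapsto\mu(\text{last state of }\rho)$, transitions $(\rho,\rho\cdot s)$. $\mathrm{HS}$ formulas: $\psi::=p\mid\neg\psi\mid\psi\wedge\psi\mid\langle X\rangle\psi$ for the Allen relations $A,L,B,E,D,O$ and inverses; all definable (non-strict semantics) from $\langle B\rangle,\langle E\rangle,\langle\bar B\rangle,\langle\bar E\rangle$. State-based semantics over traces: $\rho\models p$ iff $p\in\mu(s)$ for every state $s$ of $\rho$; $\langle B\rangle\psi$: some $\rho'\in\mathrm{Pref}(\rho)$ satisfies $\psi$; $\langle E\rangle\psi$: some $\rho'\in\mathrm{Suff}(\rho)$; $\langle\bar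 B\rangle\psi$: some trace $\rho'$ with $\rho\in\mathrm{Pref}(\rho')$; $\langle\bar E\rangle\psi$: some trace $\rho'$ with $\rho\in\mathrm{Suff}(\rho')$. $K\models_{\mathsf{st}}\psi$ iff every initial trace satisfies $\psi$; $K\models_{\mathsf{ct}}\psi$ iff $C(K)\models_{\mathsf{st}}\psi$. *)

From Stdlib Require Import List Arith ClassicalEpsilon.
Import ListNotations.
Set Implicit Arguments.

(* Kripke structure over a set AP of proposition letters.
   The state space is an arbitrary type (the computation tree is infinite);
   left-totality of delta is a separate predicate. *)
Record Kripke (AP : Type) := {
  St : Type;
  delta : St -> St -> Prop;
  mu : St -> AP -> Prop;
  s0 : St }.

Arguments St {AP} k.
Arguments delta {AP} k _ _.
Arguments mu {AP} k _ _.
Arguments s0 {AP} k.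

Definition left_total {AP} (K : Kripke AP) : Prop :=
  forall s : St K, exists t, delta K s t.

Definition finite_type (T : Type) : Prop := exists l : list T, forall x, In x l.

Definition finite_kripke {AP} (K : Kripke AP) : Prop :=
  left_total K /\ finite_type (St K).

Definition is_trace {AP} (K : Kripke AP) (rho : list (St K)) : Prop :=
  rho <> [] /\
  exists f : nat -> St K,
    (forall i, delta K (f i) (f (S i))) /\ rho = map f (seq 0 (length rho)).

Definition is_initial_trace {AP} (K : Kripke AP) (rho : list (St K)) : Prop :=
  is_trace K rho /\ hd_error rho = Some (s0 K).

(* HS formulas; the remaining Allen modalities (A, L, D, O and inverses, and
   the inverse forms) are definable from <B>, <E>, <B-bar>, <E-bar>. *)
Inductive hs (AP : Type) : Type :=
| Prop_ : AP -> hs AP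
| Neg : hs AP -> hs AP
| And : hs AP -> hs AP -> hs AP
| DiaB : hs AP -> hs AP
| DiaE : hs AP -> hs AP
| DiaBi : hs AP -> hs AP
| DiaEi : hs AP -> hs AP.

(* Pref(w) = { w[0,i] | 0 <= i <= n-1 } : proper non-empty prefixes
   Suff(w) = { w[i,n] | 1 <= i <= n }   : proper non-empty suffixes
   (w = w(0)...w(n), length n+1). *)
Definition in_Pref {T} (r w : list T) : Prop :=
  exists i, 1 <= i < length w /\ r = firstn i w.
Definition in_Suff {T} (r w : list T) : Prop :=
  exists i, 1 <= i < length w /\ r = skipn i w.

Fixpoint sat {AP} (K : Kripke AP) (rho : list (St K)) (phi : hs AP) : Prop :=
  match phi with
  | Prop_ p => forall s, In s rho -> mu K s p
  | Neg psi => ~ sat K rho psi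
  | And a b => sat K rho a /\ sat K rho b
  | DiaB psi => exists r, in_Pref r rho /\ sat K r psi
  | DiaE psi => exists r, in_Suff r rho /\ sat K r psi
  | DiaBi psi => exists r, is_trace K r /\ in_Pref rho r /\ sat K r psi
  | DiaEi psi => exists r, is_trace K r /\ in_Suff rho r /\ sat K r psi
  end.

Definition models_st {AP} (K : Kripke AP) (psi : hs AP) : Prop :=
  forall rho, is_initial_trace K rho -> sat K rho psi.

Definition CT_state {AP} (K : Kripke AP) : Type :=
  { rho : list (St K) | is_initial_trace K rho }.

Lemma s0_initial_trace {AP} (K : Kripke AP) :
  left_total K -> is_initial_trace K [s0 K].
Proof.
  intros tot.
  set (g := fun s => proj1_sig (constructive_indefinite_description _ (tot s))).
  assert (Hg : forall s, delta K s (g s))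
    by (intro s; unfold g; exact (proj2_sig (constructive_indefinite_description _ (tot s)))).
  set (f := fun n => Nat.iter n g (s0 K)).
  split; [split; [discriminate|] | reflexivity].
  exists f; split; [intro i; simpl; apply Hg | reflexivity].
Qed.

Definition CT {AP} (K : Kripke AP) (tot : left_total K) : Kripke AP :=
  {| St := CT_state K;
     delta := fun r r' => exists s, proj1_sig r' = proj1_sig r ++ [s];
     mu := fun r p => mu K (last (proj1_sig r) (s0 K)) p;
     s0 := exist _ [s0 K] (s0_initial_trace tot) |}.

Definition models_ct {AP} {K : Kripke AP} (tot : left_total K) (psi : hs AP) : Prop :=
  models_st (CT tot) psi.

(* Both the one-state loop K_loop and the lasso K_lasso (an initial state
   without predecessor, followed by a looping state) have exactly one run, so
   both computation trees are the infinite ray with every letter true;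
   isomorphic structures satisfy the same HS formulas, hence no formula tells
   the two apart under the computation-tree semantics.  Under the state-based
   semantics, psi = <E-bar> p (p holds everywhere) says that the trace can be
   extended to the left: this holds for every initial trace of K_loop, but
   fails for the initial trace s0 of K_lasso. *)

From Stdlib Require Import List Lia Setoid ProofIrrelevance.
Import ListNotations.
Set Implicit Arguments.

Section MapCancel.
Variables (A B : Type) (f : A -> B) (g : B -> A).
Hypothesis fK : forall x, g (f x) = x.

Lemma map_cancel (l : list A) : map g (map f l) = l.
Proof. rewrite map_map, (map_ext _ (fun x => x)) by exact fK. apply map_id. Qed.

Lemma map_cancel_inj (l l' : list A) : map f l = map f l' -> l = l'.
Proof. intro E. rewrite <- (map_cancel l), <- (map_cancel l'), E. reflexivity. Qed.

Lemma in_Pref_map (r w : list A) : in_Pref (map f r) (map f w) <-> in_Pref r w.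
Proof.
  split; intros [i [Hi E]]; exists i; rewrite length_map, ?firstn_map in *.
  - split; [exact Hi | exact (map_cancel_inj _ _ E)].
  - subst r. auto.
Qed.

Lemma in_Suff_map (r w : list A) : in_Suff (map f r) (map f w) <-> in_Suff r w.
Proof.
  split; intros [i [Hi E]]; exists i; rewrite length_map, ?skipn_map in *.
  - split; [exact Hi | exact (map_cancel_inj _ _ E)].
  - subst r. auto.
Qed.
End MapCancel.

Section MapSurj.
Variables (A B : Type) (f : A -> B) (g : B -> A).
Hypothesis gK : forall y, f (g y) = y.

Lemma ex_map_surj (P : list B -> Prop) : (exists l, P l) <-> (exists l, P (map f l)).
Proof.
  split; intros [l Hl]; [exists (map g l); rewrite (map_cancel _ _ gK) | exists (map f l)]; exact Hl.
Qed.

Lemma all_map_surj (P : list B -> Prop) : (forall l, P l) <-> (forall l, P (map f l)).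
Proof. split; intros H l; [|rewrite <- (map_cancel _ _ gK l)]; apply H. Qed.
End MapSurj.

Record kripke_iso {AP} (K K' : Kripke AP) := {
  iso_fun : St K -> St K';
  iso_inv : St K' -> St K;
  iso_funK : forall x, iso_inv (iso_fun x) = x;
  iso_invK : forall y, iso_fun (iso_inv y) = y;
  iso_delta : forall x y, delta K x y <-> delta K' (iso_fun x) (iso_fun y);
  iso_mu : forall x p, mu K x p <-> mu K' (iso_fun x) p;
  iso_s0 : iso_fun (s0 K) = s0 K' }.

Arguments iso_fun {AP K K'} _ _.
Arguments iso_inv {AP K K'} _ _.
Arguments iso_funK {AP K K'} _ _.
Arguments iso_invK {AP K K'} _ _.
Arguments iso_delta {AP K K'} _ _ _.
Arguments iso_mu {AP K K'} _ _ _.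
Arguments iso_s0 {AP K K'} _.

Lemma is_trace_map {AP} {K K' : Kripke AP} (h : St K -> St K')
    (hdelta : forall x y, delta K x y -> delta K' (h x) (h y)) (r : list (St K)) :
  is_trace K r -> is_trace K' (map h r).
Proof.
  intros [Hne [f [Hf Hr]]]. split.
  - destruct r; [contradiction | discriminate].
  - exists (fun n => h (f n)). split; [intro i; apply hdelta, Hf|].
    rewrite length_map, Hr at 1. apply map_map.
Qed.

Section Iso.
Context {AP : Type} {K K' : Kripke AP} (I : kripke_iso K K').
Local Notation f := (iso_fun I).
Local Notation g := (iso_inv I).

Lemma iso_fun_inj x y : f x = f y -> x = y.
Proof. intro E. rewrite <- (iso_funK I x), <- (iso_funK I y). rewrite E. reflexivity. Qed.

Lemma iso_inv_delta x y : delta K' x y -> delta K (g x) (g y).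
Proof. intro H. apply (iso_delta I). rewrite !(iso_invK I). exact H. Qed.

Lemma is_trace_iso r : is_trace K' (map f r) <-> is_trace K r.
Proof.
  split; intro H.
  - rewrite <- (map_cancel _ _ (iso_funK I) r). exact (is_trace_map _ iso_inv_delta H).
  - exact (is_trace_map _ (fun x y => proj1 (iso_delta I x y)) H).
Qed.

Lemma is_initial_trace_iso r : is_initial_trace K' (map f r) <-> is_initial_trace K r.
Proof.
  unfold is_initial_trace. rewrite is_trace_iso.
  destruct r as [|x r]; simpl; [split; intros [_ Hh]; discriminate|].
  assert (Hs0 : f x = s0 K' <-> x = s0 K).
  { rewrite <- (iso_s0 I). split; [apply iso_fun_inj | intros ->; reflexivity]. }
  split; intros [Ht Hh]; split; try exact Ht; injection Hh as Hh; f_equal; apply Hs0, Hh.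
Qed.

Lemma sat_iso phi : forall r, sat K' (map f r) phi <-> sat K r phi.
Proof.
  induction phi as [p | phi IH | phi1 IH1 phi2 IH2 | phi IH | phi IH | phi IH | phi IH];
    intro r; simpl.
  4-7: rewrite (ex_map_surj _ _ (iso_invK I)); setoid_rewrite IH;
    setoid_rewrite (in_Pref_map _ _ (iso_funK I)) || setoid_rewrite (in_Suff_map _ _ (iso_funK I));
    try setoid_rewrite is_trace_iso; reflexivity.
  - split; intros H s Hs.
    + apply (iso_mu I), H, in_map, Hs.
    + apply in_map_iff in Hs as [x [<- Hx]]. apply (iso_mu I), H, Hx.
  - rewrite IH. reflexivity.
  - rewrite IH1, IH2. reflexivity.
Qed.

Lemma models_st_iso phi : models_st K' phi <-> models_st K phi.
Proof.
  unfold models_st. rewrite (all_map_surj _ _ (iso_invK I)).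
  setoid_rewrite is_initial_trace_iso. setoid_rewrite sat_iso. reflexivity.
Qed.
End Iso.

Definition run_prefix {T : Type} (x : nat -> T) (n : nat) : list T := map x (seq 0 (S n)).

Lemma length_run_prefix {T} (x : nat -> T) n : length (run_prefix x n) = S n.
Proof. unfold run_prefix. rewrite length_map, length_seq. reflexivity. Qed.

Lemma run_prefix_S {T} (x : nat -> T) n : run_prefix x (S n) = run_prefix x n ++ [x (S n)].
Proof. unfold run_prefix. rewrite seq_S, map_app. reflexivity. Qed.

Lemma last_run_prefix {T} (x : nat -> T) n d : last (run_prefix x n) d = x n.
Proof. destruct n; [reflexivity|]. rewrite run_prefix_S. apply last_last. Qed.

Definition is_run {AP} (K : Kripke AP) (x : nat -> St K) : Prop :=
  forall i, delta K (x i) (x (S i)).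

Lemma initial_trace_unique_run {AP} (K : Kripke AP) (x : nat -> St K) :
  is_run K x -> x 0 = s0 K ->
  (forall y, is_run K y -> y 0 = s0 K -> forall i, y i = x i) ->
  forall rho, is_initial_trace K rho <-> exists n, rho = run_prefix x n.
Proof.
  intros Hx Hx0 Huniq rho. split.
  - intros [[Hne [y [Hy Hrho]]] Hhd].
    destruct rho as [|s rest]; [contradiction|].
    exists (length rest). unfold run_prefix. rewrite Hrho at 1.
    apply map_ext. intro i. apply Huniq; [exact Hy|].
    rewrite Hrho in Hhd. injection Hhd as Hhd. exact Hhd.
  - intros [n ->]. split; [split|].
    + unfold run_prefix. discriminate.
    + exists x. split; [exact Hx|]. rewrite length_run_prefix. reflexivity.
    + unfold run_prefix. simpl. rewrite Hx0. reflexivity.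
Qed.

Definition ray {AP} (lab : nat -> AP -> Prop) : Kripke AP :=
  {| St := nat; delta := fun n m => m = S n; mu := lab; s0 := 0 |}.

Section ComputationTreeOfRun.
Context {AP : Type} (K : Kripke AP) (tot : left_total K) (x : nat -> St K).
Hypothesis initial_trace_prefix :
  forall rho, is_initial_trace K rho <-> exists n, rho = run_prefix x n.

Let CT_run_prefix (n : nat) : CT_state K :=
  exist _ (run_prefix x n) (proj2 (initial_trace_prefix _) (ex_intro _ n eq_refl)).

Definition CT_iso_ray : kripke_iso (CT tot) (ray (fun n => mu K (x n))).
Proof.
  refine (@Build_kripke_iso _ (CT tot) (ray _)
            (fun r => pred (length (proj1_sig r))) CT_run_prefix _ _ _ _ _).
  - intro r. apply eq_sig_hprop; [intros; apply proof_irrelevance|].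
    destruct r as [rho Hrho]. simpl. destruct (proj1 (initial_trace_prefix _) Hrho) as [n ->].
    rewrite length_run_prefix. reflexivity.
  - intro n. exact (f_equal pred (length_run_prefix x n)).
  - intros [rho Hrho] [rho' Hrho']. simpl.
    destruct (proj1 (initial_trace_prefix _) Hrho) as [n ->],
      (proj1 (initial_trace_prefix _) Hrho') as [m ->].
    rewrite !length_run_prefix. split.
    + intros [s E]. apply (f_equal (@length _)) in E.
      rewrite length_app, !length_run_prefix in E. simpl in *. lia.
    + simpl. intros ->. exists (x (S n)). apply run_prefix_S.
  - intros [rho Hrho] p. simpl. destruct (proj1 (initial_trace_prefix _) Hrho) as [n ->].
    rewrite last_run_prefix, length_run_prefix. reflexivity.
  - reflexivity.
Defined.
End ComputationTreeOfRun.

Lemma in_Suff_cons {T} (a : T) (w : list T) : w <> [] -> in_Suff w (a :: w).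
Proof. intro Hw. exists 1. destruct w; [contradiction|]. simpl. split; [lia | reflexivity]. Qed.

Lemma sat_DiaEi_pred {AP} (K : Kripke AP) (s : St K) (w : list (St K)) (phi : hs AP) :
  sat K (s :: w) (DiaEi phi) -> exists s', delta K s' s.
Proof.
  intros [r [[_ [f [Hf Hr]]] [[i [Hi Hs]] _]]].
  destruct i as [|j]; [lia|].
  exists (f j). rewrite Hr, skipn_map, skipn_seq in Hs.
  destruct (length r - S j) as [|k]; [discriminate|].
  injection Hs as -> _. apply Hf.
Qed.

Definition K_loop : Kripke unit :=
  {| St := unit; delta := fun _ _ => True; mu := fun _ _ => True; s0 := tt |}.

Definition K_lasso : Kripke unit :=
  {| St := bool; delta := fun _ t => t = true; mu := fun _ _ => True; s0 := false |}.

Definition lasso_run (i : nat) : bool := match i with 0 => false | S _ => true end.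

Lemma K_loop_initial_trace rho :
  is_initial_trace K_loop rho <-> exists n, rho = run_prefix (fun _ => tt) n.
Proof.
  apply initial_trace_unique_run; [intro i; exact I | reflexivity |].
  intros y _ _ i. destruct (y i). reflexivity.
Qed.

Lemma K_lasso_initial_trace rho :
  is_initial_trace K_lasso rho <-> exists n, rho = run_prefix lasso_run n.
Proof.
  apply initial_trace_unique_run; [intro i; reflexivity | reflexivity |].
  intros y Hy Hy0 [|i]; [exact Hy0 | exact (Hy i)].
Qed.

Lemma K_loop_finite : finite_kripke K_loop.
Proof. split; [intro s; exists tt; exact I | exists [tt]; intros []; left; reflexivity]. Qed.

Lemma K_lasso_finite : finite_kripke K_lasso.
Proof.
  split; [intro s; exists true; reflexivity | exists [true; false]; intros []; simpl; auto].
Qed.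

Lemma loop_lasso_models_ct (t1 : left_total K_loop) (t2 : left_total K_lasso) phi :
  models_ct t1 phi <-> models_ct t2 phi.
Proof.
  (* both rays are convertible to [ray (fun _ _ => True)] *)
  unfold models_ct.
  rewrite <- (models_st_iso (CT_iso_ray t1 K_loop_initial_trace)),
    <- (models_st_iso (CT_iso_ray t2 K_lasso_initial_trace)).
  reflexivity.
Qed.

Lemma K_loop_models_DiaEi : models_st K_loop (DiaEi (Prop_ tt)).
Proof.
  intros rho Hrho. pose proof Hrho as [n ->]%K_loop_initial_trace.
  exists (tt :: run_prefix (fun _ => tt) n). split; [|split; [|intros s _; exact I]].
  - apply K_loop_initial_trace. exists (S n). unfold run_prefix.
    rewrite <- (cons_seq (S n) 0), <- seq_shift, !map_cons, map_map. reflexivity.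
  - apply in_Suff_cons. unfold run_prefix. discriminate.
Qed.

Lemma K_lasso_not_models_DiaEi : ~ models_st K_lasso (DiaEi (Prop_ tt)).
Proof.
  intro H.
  destruct (sat_DiaEi_pred (H _ (s0_initial_trace (proj1 K_lasso_finite)))) as [s' E].
  discriminate E.
Qed.

Theorem proposition5p1 :
  exists (AP : Type), finite_type AP /\
  exists psi : hs AP,
    forall phi : hs AP,
      ~ (forall (K : Kripke AP) (HK : finite_kripke K),
           models_ct (proj1 HK) phi <-> models_st K psi).
Proof.
  exists unit. split; [exists [tt]; intros []; left; reflexivity|].
  exists (DiaEi (Prop_ tt)). intros phi Hphi.
  apply K_lasso_not_models_DiaEi, (Hphi K_lasso K_lasso_finite).
  rewrite <- (loop_lasso_models_ct (proj1 K_loop_finite)).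
  apply (Hphi K_loop K_loop_finite), K_loop_models_DiaEi.
Qed.
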